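(* Let $f\in\mathbb{Z}[x,y]$ be square-free with $n_y:=\deg_y f\ge1$, and assume $\deg_y f(\alpha,y)=n_y$ for all $\alpha\in\mathbb{C}$. Let $p$ be a prime that does not divide the leading coefficient (with respect to $y$) of $f$ and of $f_y$, and let $d_i^{(p)}:=\deg R_i^{(p)}$, with $R_i^{(p)}$ as in the context. Then $$N^-:=\sum_{i\ge1}(n_y-i)\,d_i^{(p)}\le N,$$ where $N:=\sum_{\alpha}n_\alpha$, the sum taken over all complex $x$-critical values $\alpha$ of $f$, is the total number of distinct complex points of the curve $f=0$ lying in $x$-critical fibers.
   Context: An $x$-critical value of $f$ is an $\alpha\in\mathbb{C}$ with $f(\alpha,\beta)=f_y(\alpha,\beta)=0$ for some $\beta\in\mathbb{C}$; equivalently a root of $R=\operatorname{res}(f,f_y;y)$. $n_\alpha$ is the number of distinct complex roots of $f(\alpha,y)$. Let $R^*$ be the square-free part of $R$. For polynomials $a,b$ in $y$ with coefficients in a ring $A[x]$, the $i$-th principal subresultant coefficient $\operatorname{sres}_i(a,b;y)\in A[x]$ is the coefficient of $y^i$ in the $i$-th subresultant $\operatorname{Sres}_i(a,b;y)$ (equivalently the determinant of the submatrix of the Sylvester matrix of $a,b$ w.r.t. $y$ obtained by deleting the last $i$ rows of $a$-coefficients, the last $i$ rows of $b$-coefficients and the last $2i$ columns). Let $f^{(p)}=f\bmod p$, $g^{(p)}=f_y\bmod p\in\mathbb{Z}_p[x,y]$, and $\operatorname{sr}_i^{(p)}:=\operatorname{sres}_i(f^{(p)},g^{(p)};y)\in\mathbb{Z}_p[x]$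 computed over $\mathbb{Z}_p$. Define in $\mathbb{Z}_p[x]$: $S_0^{(p)}:=R^*\bmod p$, $S_i^{(p)}:=\gcd(S_{i-1}^{(p)},\operatorname{sr}_i^{(p)})$ for $i\ge1$, and $R_i^{(p)}:=\gcd(S_0^{(p)},\dots,S_{i-1}^{(p)})/\gcd(S_0^{(p)},\dots,S_i^{(p)})$ for $i\ge1$ (gcds taken up to units; only degrees matter). *)

From HB Require Import structures.
From mathcomp Require Import all_boot all_order all_algebra.
From mathcomp Require Import separable algC.
Set Implicit Arguments. Unset Strict Implicit. Unset Printing Implicit Defensive.
Import Order.TTheory GRing.Theory Num.Theory.
Local Open Scope ring_scope.

(* Bivariate polynomials f(x,y) are represented as {poly {poly R}}:
   the outer variable is y, the inner variable (coefficients) is x. *)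

Definition icast (R : nzRingType) (z : int) : R := z%:~R.

Definition redx (F : nzRingType) (c : {poly int}) : {poly F} := map_poly (@icast F) c.
Definition redxy (F : nzRingType) (f : {poly {poly int}}) : {poly {poly F}} :=
  map_poly (@redx F) f.

Definition evalx (a : algC) (f : {poly {poly int}}) : {poly algC} :=
  map_poly (fun c : {poly int} => (redx algC c).[a]) f.

Definition xcritical (f : {poly {poly int}}) (a : algC) : Prop :=
  exists b : algC, (evalx a f).[b] = 0 /\ (evalx a f^`()).[b] = 0.

Definition root_list (q : {poly algC}) (r : seq algC) : Prop :=
  uniq r /\ forall b : algC, (b \in r) = root q b.

(* The submatrix of the Sylvester matrix of a, b (w.r.t. y, descending powers)
   obtained by deleting the last i rows of a-coefficients, the last i rows of
   b-coefficients and the last 2i columns; with m = deg a, n = deg b, its first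
   n - i rows are shifts of the coefficients of a, the last m - i rows shifts
   of the coefficients of b. *)
Definition sres_mx (R : nzRingType) (a b : {poly {poly R}}) (i : nat) :
  'M[{poly R}]_((size a).-1 + (size b).-1 - i.*2) :=
  \matrix_(r, c)
    let m := (size a).-1 in let n := (size b).-1 in
    if (r < n - i)%N then
      (if (c <= m + r)%N then a`_(m + r - c) else 0)
    else
      let l := (r - (n - i))%N in
      (if (c <= n + l)%N then b`_(n + l - c) else 0).

Definition sres (R : comNzRingType) (a b : {poly {poly R}}) (i : nat) : {poly R} :=
  \det (sres_mx a b i).

Section Chain.
Variable F : fieldType.
Variables (S0 : {poly F}) (sr : nat -> {poly F}).

Fixpoint Schain (i : nat) : {poly F} :=
  if i is k.+1 then gcdp (Schain k) (sr k.+1) else S0.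

Definition Sgcd (i : nat) : {poly F} :=
  foldr (@gcdp F) 0 [seq Schain k | k <- iota 0 i.+1].

Definition Rchain (i : nat) : {poly F} := Sgcd i.-1 %/ Sgcd i.
End Chain.

(* d_i^{(p)} = deg R_i^{(p)} for f and the square-free part Rs of res(f, f_y; y). *)
Definition dmod (p : nat) (f : {poly {poly int}}) (Rs : {poly int}) (i : nat) : nat :=
  let fp := redxy 'F_p f in
  let gp := redxy 'F_p f^`() in
  (size (Rchain (redx 'F_p Rs) (sres fp gp) i)).-1.

From HB Require Import structures.
From mathcomp Require Import all_boot all_order all_algebra.
From mathcomp Require Import separable algC zify.
Set Implicit Arguments. Unset Strict Implicit. Unset Printing Implicit Defensive.
Import Order.TTheory GRing.Theory Num.Theory.

(* Let S_j be the gcd chain mod p, so that d_i = deg S_(i-1) - deg S_i and the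
   weighted sum N^- telescopes to the sum over 1 <= j < n_y of deg S_0 - deg S_j.
   The same chain computed over Q has a primitive integer associate T dividing R^*
   and sres_1, ..., sres_j; reducing mod p gives deg S_0 - deg S_j <= deg R^* - deg T,
   and over C, R^* being square-free, deg R^* - deg T is at most the number of
   critical values at which one of sres_1, ..., sres_j does not vanish.  Finally
   sres_i(alpha) = 0 as soon as i + n_alpha < n_y, so each critical value alpha is
   counted for at most n_alpha indices j. *)

Lemma weighted_telescope_sumn (z : nat -> nat) n :
    (forall k, z k.+1 <= z k) ->
  \sum_(1 <= i < n) (n - i) * (z i.-1 - z i) = \sum_(1 <= j < n) (z 0 - z j).
Proof.
move=> zS.
have z_noninc i j : i <= j -> z j <= z i.
  elim: j => [|j IHj]; first by rewrite leqn0 => /eqP ->.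
  by rewrite leq_eqVlt => /predU1P [-> //| ij]; apply: leq_trans (zS j) (IHj ij).
have telescope m : \sum_(1 <= i < m.+1) (z i.-1 - z i) = z 0 - z m.
  elim: m => [|m IHm]; first by rewrite big_geq // subnn.
  rewrite big_nat_recr //= IHm; have := z_noninc 0 m (leq0n m); have := zS m; lia.
elim: n => [|n IHn]; first by rewrite !big_geq.
case: n IHn => [|n] IHn; first by rewrite !big_geq.
rewrite [RHS]big_nat_recr //= -IHn -telescope [in LHS]big_nat_recr //=.
rewrite subSn // subnn.
rewrite mul1n [X in _ = _ + X]big_nat_recr //= addnA -big_split; congr (_ + _).
apply: eq_big_nat => i /andP [_ i_le].
by rewrite subSn 1?ltnW // mulSn addnC.
Qed.

Lemma sum_indicator_le n g (P : pred nat) :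
  (forall j, P j -> g <= j) -> \sum_(1 <= j < n) P j <= n - g.
Proof.
move=> Pg; elim: n => [|n IHn]; first by rewrite big_geq.
case: n IHn => [|n] IHn; first by rewrite big_geq.
rewrite big_nat_recr //=; case Pn: (P n.+1); last by rewrite addn0; lia.
by have := Pg _ Pn; lia.
Qed.

Local Open Scope ring_scope.

Definition subres_mx (A : nzRingType) (a b : {poly A}) (i : nat) :
  'M[A]_((size a).-1 + (size b).-1 - i.*2) :=
  \matrix_(r, c)
    let m := (size a).-1 in let n := (size b).-1 in
    if (r < n - i)%N then
      (if (c <= m + r)%N then a`_(m + r - c) else 0)
    else
      let l := (r - (n - i))%N in
      (if (c <= n + l)%N then b`_(n + l - c) else 0).

Definition subres (A : comNzRingType) (a b : {poly A}) (i : nat) : A :=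
  \det (subres_mx a b i).

Lemma sresE (R : comNzRingType) (a b : {poly {poly R}}) i : sres a b i = subres a b i.
Proof. by []. Qed.

Lemma subres_map (A B : comNzRingType) (phi : {rmorphism A -> B}) (a b : {poly A}) i :
    phi (lead_coef a) != 0 -> phi (lead_coef b) != 0 ->
  subres (map_poly phi a) (map_poly phi b) i = phi (subres a b i).
Proof.
move=> phi_a phi_b; rewrite /subres -det_map_mx /subres_mx.
rewrite !size_map_poly_id0 //; congr (\det _); apply/matrixP => r c; rewrite !mxE /=.
by case: ifP => _; case: ifP => _; rewrite ?coef_map ?rmorph0.
Qed.

Lemma poly_sum_coefs (K : nzRingType) (u : {poly K}) s :
  (size u <= s)%N -> u = \sum_(0 <= r < s) u`_r *: 'X^r.
Proof.
move=> us; rewrite big_mkord -poly_def; apply/polyP => k; rewrite coef_poly.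
by case: ifP => // /negbT; rewrite -leqNgt => sk; apply/leq_sizeP: (leq_trans us sk).
Qed.

Section SubresultantVanishing.
Variables (K : fieldType) (a b : {poly K}) (i : nat).
Let m := (size a).-1.
Let n := (size b).-1.
Hypotheses (i_le_m : (i <= m)%N) (i_le_n : (i <= n)%N).
Let N := (m + n - i.*2)%N.

Let top_coefs (p : {poly K}) : 'rV[K]_N := \row_(c < N) p`_(m + n - i - 1 - c).

(* The rows of the subresultant matrix are the coefficient vectors of
   X^(n-i-1) a, ..., a, X^(m-i-1) b, ..., b, read from degree m+n-i-1 downwards. *)
Let shifted (r : nat) : {poly K} :=
  if (r < n - i)%N then 'X^(n - i - 1 - r) * a else 'X^(m - i - 1 - (r - (n - i))) * b.

Let mult_coefs (u v : {poly K}) (r : nat) : K :=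
  if (r < n - i)%N then u`_(n - i - 1 - r) else v`_(m - i - 1 - (r - (n - i))).

Lemma row_subres_mx (r : 'I_N) : row r (subres_mx a b i) = top_coefs (shifted r).
Proof.
apply/rowP => -[c c_lt]; case: r => r r_lt; rewrite !mxE /shifted /=.
rewrite -/m -/n in c_lt r_lt *.
case: ifP => r_lt_ni; rewrite coefXnM.
  have -> : (m + n - i - 1 - c < n - i - 1 - r)%N = ~~ (c <= m + r)%N.
    by apply/idP/idP; lia.
  by case: ifP => c_le //=; congr (a`_ _); lia.
have -> : (m + n - i - 1 - c < m - i - 1 - (r - (n - i)))%N = ~~ (c <= n + (r - (n - i)))%N.
  by apply/idP/idP; lia.
by case: ifP => c_le //=; congr (b`_ _); lia.
Qed.

Lemma sum_mult_coefs_shifted (u v : {poly K}) :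
    (size u <= n - i)%N -> (size v <= m - i)%N ->
  \sum_(r < N) mult_coefs u v r *: shifted r = u * a + v * b.
Proof.
move=> su sv; have N_split : N = (n - i + (m - i))%N by lia.
rewrite -(big_mkord xpredT (fun r => mult_coefs u v r *: shifted r)) N_split.
rewrite (big_cat_nat _ (leq_addr _ _)) //= {3}(poly_sum_coefs su) {3}(poly_sum_coefs sv).
rewrite !big_distrl /=; congr (_ + _).
  rewrite big_nat_rev /=; apply: eq_big_nat => r /andP [_ r_lt].
  rewrite /mult_coefs /shifted add0n -scalerAl; have -> : (n - i - r.+1 < n - i)%N by lia.
  by have -> : (n - i - 1 - (n - i - r.+1) = r)%N by lia.
rewrite -{1}(add0n (n - i)%N) big_addn addKn big_nat_rev /=.
apply: eq_big_nat => r /andP [_ r_lt]; rewrite /mult_coefs /shifted add0n -scalerAl.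
have -> : (m - i - r.+1 + (n - i) < n - i)%N = false by lia.
by have -> : (m - i - 1 - (m - i - r.+1 + (n - i) - (n - i)) = r)%N by lia.
Qed.

Lemma subres_eq0 (u v : {poly K}) :
    (size u <= n - i)%N -> (size v <= m - i)%N -> v != 0 ->
  u * a + v * b = 0 -> subres a b i = 0.
Proof.
move=> su sv v_neq0 uv0; apply/eqP/det0P.
exists (\row_(r < N) mult_coefs u v r).
  have sv_gt0 : (0 < size v)%N by rewrite size_poly_gt0.
  have r_lt : (n - i + (m - i - size v) < N)%N by lia.
  apply/negP => /eqP/rowP/(_ (Ordinal r_lt)); rewrite !mxE /mult_coefs.
  have -> : (n - i + (m - i - size v) < n - i)%N = false by lia.
  have -> : (m - i - 1 - (n - i + (m - i - size v) - (n - i)) = (size v).-1)%N by lia.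
  by move/eqP; rewrite -lead_coefE lead_coef_eq0 (negPf v_neq0).
rewrite mulmx_sum_row; under eq_bigr => r _ do rewrite row_subres_mx.
transitivity (top_coefs (\sum_(r < N) mult_coefs u v r *: shifted r)).
  apply/rowP => c; rewrite !mxE summxE coef_sum; apply: eq_bigr => r _.
  by rewrite !mxE coefZ.
by rewrite sum_mult_coefs_shifted // uv0; apply/rowP => c; rewrite !mxE coef0.
Qed.

End SubresultantVanishing.

Lemma size_deriv_char0 (R : idomainType) (p : {poly R}) :
  (forall k, k.+1%:R != 0 :> R) -> size p^`() = (size p).-1.
Proof.
move=> natr_neq0; have [le_p1|lt_1p] := leqP (size p) 1.
  by rewrite [p]size1_polyC // derivC size_poly0 size_polyC; case: (_ == 0).
rewrite size_poly_eq // -mulr_natr mulf_neq0 // prednK -?subn1 ?subn_gt0 //.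
by rewrite subn1 -lead_coefE lead_coef_eq0 -size_poly_eq0; lia.
Qed.

Lemma size_deriv_num (K : numDomainType) (p : {poly K}) : size p^`() = (size p).-1.
Proof. by apply: size_deriv_char0 => k; rewrite pnatr_eq0. Qed.

Lemma dvdp_prod_XsubC_mul_deriv (K : idomainType) (rs : seq K) (P : {poly K}) :
  all (root P) rs -> \prod_(z <- rs) ('X - z%:P) %| P * (\prod_(z <- rs) ('X - z%:P))^`().
Proof.
elim: rs => [|z rs IHrs] /=; first by rewrite big_nil dvd1p.
case/andP => Pz Prs; rewrite big_cons derivM derivXsubC mul1r mulrDr.
apply: dvdp_add; first by apply: dvdp_mul => //; rewrite dvdp_XsubCl.
by rewrite mulrCA; apply: dvdp_mul => //; apply: IHrs.
Qed.

(* With P the product of the X - z over the distinct roots z of a, the divisibility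
   a | P a' gives a relation Q a = P a' with deg P = #roots, hence the vanishing. *)
Lemma subres_deriv_eq0 (K : numClosedFieldType) (a : {poly K}) (rs : seq K) i :
    (forall z, (z \in rs) = root a z) -> (i + size rs < (size a).-1)%N ->
  subres a a^`() i = 0.
Proof.
move=> rsE; have := size_deriv_num a; set n := size a => sizeD i_lt.
have a_neq0 : a != 0 by rewrite -size_poly_eq0 -/n; lia.
set P := \prod_(z <- rs) ('X - z%:P).
have sizeP : size P = (size rs).+1 by rewrite size_prod_XsubC.
have P_neq0 : P != 0 by rewrite -size_poly_eq0 sizeP.
have [Q PQ] : exists Q, P * a^`() = Q * a.
  apply/dvdpP; have [r Dr] := closed_field_poly_normal a.
  have lc_neq0 : lead_coef a != 0 by rewrite lead_coef_eq0.
  rewrite Dr derivZ -scalerAr dvdpZl ?dvdpZr //.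
  apply: dvdp_prod_XsubC_mul_deriv; apply/allP => z z_r.
  by rewrite root_prod_XsubC rsE Dr rootZ // root_prod_XsubC.
have a'_neq0 : a^`() != 0 by rewrite -size_poly_eq0 sizeD; lia.
have Q_neq0 : Q != 0 by apply: contra_eqN PQ => /eqP->; rewrite mul0r mulf_neq0.
have sizeQ : size Q = size rs.
  have := congr1 (fun q : {poly K} => size q) PQ; rewrite !size_mul // sizeP sizeD.
  by rewrite -/n; set sQ := size Q; lia.
apply: (@subres_eq0 _ a a^`() i _ _ (- Q) P); rewrite ?size_opp ?sizeD ?sizeP ?sizeQ //;
  try by rewrite -/n; lia.
by rewrite mulNr -PQ addNr.
Qed.

Section SubresultantChain.
Variables (F : fieldType) (S0 : {poly F}) (sr : nat -> {poly F}).
Local Notation S := (Schain S0 sr).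

Lemma Schain_dvdp k j : (k <= j)%N -> S j %| S k.
Proof.
elim: j => [|j IHj]; first by rewrite leqn0 => /eqP ->.
rewrite leq_eqVlt => /predU1P [-> //|lt_kj].
exact: dvdp_trans (dvdp_gcdl _ _) (IHj lt_kj).
Qed.

Lemma Schain_dvdp_sr i j : (1 <= i <= j)%N -> S j %| sr i.
Proof.
case: i => [//|i] /andP [_ le_ij]; apply: dvdp_trans (Schain_dvdp le_ij) _.
exact: dvdp_gcdr.
Qed.

Lemma dvdp_Schain (T : {poly F}) j :
  T %| S0 -> (forall i, (1 <= i <= j)%N -> T %| sr i) -> T %| S j.
Proof.
move=> T_S0; elim: j => [//|j IHj] T_sr /=.
rewrite dvdp_gcd T_sr ?leqnn // IHj // => i /andP [i_gt0 le_ij].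
by rewrite T_sr // i_gt0 ltnW.
Qed.

Hypothesis S0_neq0 : S0 != 0.

Lemma Schain_neq0 k : S k != 0.
Proof. by elim: k => //= k IHk; rewrite gcdp_eq0 negb_and IHk. Qed.

Lemma size_Schain_leS k : (size (S k.+1) <= size (S k))%N.
Proof. exact: dvdp_leq (Schain_neq0 k) (Schain_dvdp (leqnSn k)). Qed.

Lemma Sgcd_eqp k : Sgcd S0 sr k %= S k.
Proof.
suff gcd_from m l : foldr (@gcdp F) 0 [seq S i | i <- iota m l.+1] %= S (m + l).
  exact: gcd_from 0 k.
elim: l m => [|l IHl] m; first by rewrite /= gcdp0 addn0 eqpxx.
apply: eqp_trans (eqp_gcdr _ (IHl m.+1)) _; rewrite addSnnS.
exact/dvdp_gcd_idr/Schain_dvdp/leq_addr.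
Qed.

Lemma size_Rchain i : (0 < i)%N ->
  (size (Rchain S0 sr i)).-1 = (size (S i.-1) - size (S i))%N.
Proof.
move=> i_gt0; rewrite /Rchain size_divp; last first.
  by rewrite -size_poly_eq0 (eqp_size (Sgcd_eqp _)) size_poly_eq0 Schain_neq0.
rewrite !(eqp_size (Sgcd_eqp _)).
have := size_Schain_leS i.-1; rewrite prednK // => le_size.
have : (0 < size (S i))%N by rewrite size_poly_gt0 Schain_neq0.
by move: le_size; set x := size (S i); set y := size (S i.-1); lia.
Qed.

End SubresultantChain.

Lemma eq_Schain (F : fieldType) (S0 : {poly F}) (sr1 sr2 : nat -> {poly F}) :
  sr1 =1 sr2 -> Schain S0 sr1 =1 Schain S0 sr2.
Proof. by move=> sr12; elim=> //= k ->; rewrite sr12. Qed.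

Lemma eq_Rchain (F : fieldType) (S0 : {poly F}) (sr1 sr2 : nat -> {poly F}) :
  sr1 =1 sr2 -> Rchain S0 sr1 =1 Rchain S0 sr2.
Proof. by move=> /eq_Schain sr12 i; rewrite /Rchain /Sgcd !(eq_map (sr12 S0)). Qed.

Lemma root_map_Schain (F E : fieldType) (phi : {rmorphism F -> E})
    (S0 : {poly F}) (sr : nat -> {poly F}) j x :
  root (map_poly phi (Schain S0 sr j)) x =
    root (map_poly phi S0) x && all (fun i => root (map_poly phi (sr i)) x) (iota 1 j).
Proof.
elim: j => [|j IHj]; first by rewrite /= andbT.
have -> : iota 1 j.+1 = iota 1 j ++ [:: j.+1] by rewrite -[j.+1]addn1 iotaD /= addnC.
by rewrite [Schain _ _ _]/= gcdp_map root_gcd IHj all_cat /= andbT andbA.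
Qed.

Lemma dvdp_separable_roots (K : closedFieldType) (D G : {poly K}) :
  separable_poly D -> (forall x, root D x -> root G x) -> D %| G.
Proof.
move=> D_sep DG; have D_neq0 := separable_poly_neq0 D_sep.
have [r Dr] := closed_field_poly_normal D.
have lc_neq0 : lead_coef D != 0 by rewrite lead_coef_eq0.
have r_uniq : uniq r.
  by rewrite -separable_prod_XsubC -(eqp_separable (eqp_scale _ lc_neq0)) -Dr.
rewrite Dr dvdpZl //; apply: uniq_roots_dvdp; last by rewrite uniq_rootsE.
by apply/allP => z z_r; apply: DG; rewrite Dr rootZ // root_prod_XsubC.
Qed.

(* Every root of D outside B is a root of G, so D divides G times the product of
   the X - x over B. *)
Lemma size_separable_le (K : closedFieldType) (D G : {poly K}) (B : seq K) :
    separable_poly D -> G != 0 -> (forall x, root D x -> (x \in B) || root G x) ->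
  (size D <= size B + size G)%N.
Proof.
move=> D_sep G_neq0 DBG; set W := \prod_(x <- B) ('X - x%:P).
have sizeW : size W = (size B).+1 by rewrite size_prod_XsubC.
have W_neq0 : W != 0 by rewrite -size_poly_eq0 sizeW.
have D_WG : D %| W * G.
  apply: dvdp_separable_roots => // x /DBG; rewrite rootM root_prod_XsubC.
  by case/orP => ->; rewrite ?orbT.
by have := dvdp_leq (mulf_neq0 W_neq0 G_neq0) D_WG; rewrite size_mul // sizeW.
Qed.

Local Notation ratp := (map_poly (intr : int -> rat)).

Lemma map_ratr_ratp (c : {poly int}) : map_poly ratr (ratp c) = redx algC c.
Proof. by rewrite -map_poly_comp; apply: eq_map_poly => z /=; rewrite ratr_int. Qed.

Lemma dvdp_primitive_of_rat (T s : {poly int}) :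
  zprimitive T = T -> ratp T %| ratp s -> exists r, s = T * r.
Proof. by move=> T_prim; rewrite dvdp_rat_int => /dvdpP_int [r]; rewrite T_prim; exists r. Qed.

Lemma rat_poly_primitive_eqp (q : {poly rat}) :
  q != 0 -> exists T : {poly int}, zprimitive T = T /\ ratp T %= q.
Proof.
move=> q_neq0; have [t [c c_neq0 q_t]] := rat_poly_scale q.
have t_neq0 : t != 0 by apply: contraNneq q_neq0 => t0; rewrite q_t t0 rmorph0 scaler0.
exists (zprimitive t); split; first exact: zprimitive_id.
rewrite q_t {2}(zpolyEprim t) map_polyZ /= scalerA eqp_sym eqp_scale //.
by rewrite mulf_neq0 ?invr_eq0 ?intr_eq0 ?zcontents_eq0.
Qed.

Lemma size_redx_factor_le (F : fieldType) (S0 T U : {poly int}) (S : {poly F}) :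
    S0 = T * U -> redx F S0 != 0 -> redx F T %| S -> S != 0 ->
  (size (redx F S0) + size T <= size S + size S0)%N.
Proof.
move=> S0_TU; rewrite S0_TU /redx rmorphM /=.
set Tp := map_poly _ T; set Up := map_poly _ U => TUp_neq0 Tp_S S_neq0.
have [Tp_neq0 Up_neq0] : Tp != 0 /\ Up != 0 by apply/andP; rewrite -negb_or -mulf_eq0.
have T_neq0 : T != 0 by apply: contraNneq Tp_neq0 => T0; rewrite /Tp T0 rmorph0.
have U_neq0 : U != 0 by apply: contraNneq Up_neq0 => U0; rewrite /Up U0 rmorph0.
rewrite !size_mul //; have := dvdp_leq S_neq0 Tp_S.
have : (size Up <= size U)%N by rewrite size_poly.
have : (0 < size Tp)%N by rewrite size_poly_gt0.
have : (0 < size Up)%N by rewrite size_poly_gt0.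
have : (0 < size T)%N by rewrite size_poly_gt0.
set a1 := size Tp; set a2 := size Up; set a3 := size T; set a4 := size U.
set a5 := size S; lia.
Qed.

Lemma lead_coef_map_neq0 (A B : nzRingType) (phi : {rmorphism A -> B}) (p : {poly A}) :
  p != 0 -> size (map_poly phi p) = size p -> phi (lead_coef p) != 0.
Proof.
move=> p_neq0 size_phi; rewrite lead_coefE -coef_map -size_phi -lead_coefE.
by rewrite lead_coef_eq0 -size_poly_eq0 size_phi size_poly_eq0.
Qed.

Definition specx (a : algC) : {rmorphism {poly int} -> algC} :=
  (horner_eval a \o redx algC)%FUN.

Lemma evalx_map a g : evalx a g = map_poly (specx a) g.
Proof. by []. Qed.

Lemma sres_redxy (F : comNzRingType) (f : {poly {poly int}}) i :
    redx F (lead_coef f) != 0 -> redx F (lead_coef f^`()) != 0 ->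
  sres (redxy F f) (redxy F f^`()) i = redx F (sres f f^`() i).
Proof. exact: (@subres_map _ _ (map_poly (@icast F) : {rmorphism _ -> _})). Qed.

Lemma size_deriv_polyint (p : {poly {poly int}}) : size p^`() = (size p).-1.
Proof. by apply: size_deriv_char0 => k; rewrite -polyC_natr polyC_eq0 pnatr_eq0. Qed.

Lemma redx_Fp_neq0 (p : nat) (c : {poly int}) :
  prime p -> `|zcontents c| = 1 -> redx 'F_p c != 0.
Proof.
move=> p_prime c_prim; apply/eqP => cp0.
have : (p %| zcontents c)%Z.
  rewrite dvdz_contents; apply/polyOverP => i.
  have := congr1 (fun q : {poly 'F_p} => q`_i) cp0.
  by rewrite /= /redx coef_map coef0 /icast (dvdz_pcharf (pchar_Fp p_prime)) => ->.
have abs_c : absz (zcontents c) = 1%N by apply/eqP; rewrite -(@eqr_nat int) natz abszE c_prim.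
by rewrite dvdzE abs_c /= dvdn1 => /eqP p1; rewrite p1 in p_prime.
Qed.

Section CriticalFibres.
Variable f : {poly {poly int}}.
Hypothesis size_f : (2 <= size f)%N.
Hypothesis size_evalx : forall a, size (evalx a f) = size f.

Lemma evalx_deriv a : evalx a f^`() = (evalx a f)^`().
Proof. by rewrite !evalx_map deriv_map. Qed.

Lemma size_evalx_deriv a : size (evalx a f^`()) = size f^`().
Proof. by rewrite evalx_deriv size_deriv_num size_evalx size_deriv_polyint. Qed.

Lemma specx_lead_coef a : specx a (lead_coef f) != 0.
Proof.
apply: lead_coef_map_neq0; last by rewrite -evalx_map size_evalx.
by rewrite -size_poly_eq0 -lt0n (ltnW size_f).
Qed.

Lemma specx_lead_coef_deriv a : specx a (lead_coef f^`()) != 0.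
Proof.
apply: lead_coef_map_neq0; rewrite -?evalx_map ?size_evalx_deriv //.
by rewrite -size_poly_eq0 size_deriv_polyint; lia.
Qed.

Lemma specx_sres a i : specx a (sres f f^`() i) = subres (evalx a f) (evalx a f)^`() i.
Proof.
rewrite sresE -(@subres_map _ _ (specx a)) ?specx_lead_coef ?specx_lead_coef_deriv //.
by rewrite -!evalx_map evalx_deriv.
Qed.

Lemma xcritical_of_root_resultant a :
  root (redx algC (resultant f f^`())) a -> xcritical f a.
Proof.
change (specx a (resultant f f^`()) == 0 -> xcritical f a).
rewrite (@map_resultant _ _ (specx a)) ?specx_lead_coef ?specx_lead_coef_deriv //.
rewrite -!evalx_map evalx_deriv resultant_eq0 => gcd_nonconst.
have [b gcd_b] : exists b, root (gcdp (evalx a f) (evalx a f)^`()) b.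
  by apply/closed_rootP; rewrite neq_ltn gcd_nonconst orbT.
exists b; rewrite evalx_deriv; split; apply/eqP.
  exact: root_dvdp (dvdp_gcdl _ _) gcd_b.
exact: root_dvdp (dvdp_gcdr _ _) gcd_b.
Qed.

Lemma specx_sres_eq0 a rs i : root_list (evalx a f) rs ->
  (i + size rs < (size f).-1)%N -> specx a (sres f f^`() i) = 0.
Proof.
case=> _ rsE lt_i; rewrite specx_sres; apply: (subres_deriv_eq0 rsE).
by rewrite size_evalx.
Qed.

Variable crit : seq algC.
Hypothesis crit_complete : forall a, xcritical f a -> a \in crit.

Definition critical_sres_neq0 (j : nat) : seq algC :=
  [seq a <- crit | has (fun i => specx a (sres f f^`() i) != 0) (iota 1 j)].

(* The primitive integer associate T of the chain computed over Q divides R^* and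
   the sres_i; it bounds the chain mod p from below, while over C the roots of R^*
   outside critical_sres_neq0 j are roots of T. *)
Lemma Schain_size_drop_le (F : fieldType) (Rs : {poly int}) j :
    separable_poly (redx algC Rs) ->
    (forall a, root (redx algC Rs) a = root (redx algC (resultant f f^`())) a) ->
    redx F Rs != 0 ->
  (size (redx F Rs) - size (Schain (redx F Rs) (fun i => redx F (sres f f^`() i)) j)
    <= size (critical_sres_neq0 j))%N.
Proof.
move=> Rs_sep Rs_roots RsF_neq0.
have Rs_neq0 : Rs != 0 by apply: contraNneq RsF_neq0 => ->; rewrite /redx rmorph0.
set SQ := Schain (ratp Rs) (fun i => ratp (sres f f^`() i)) j.
have RsQ_neq0 : ratp Rs != 0 by rewrite -size_poly_eq0 size_rat_int_poly size_poly_eq0.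
have SQ_neq0 : SQ != 0 by apply: Schain_neq0.
have [T [T_prim T_SQ]] := rat_poly_primitive_eqp SQ_neq0.
have [U Rs_TU] : exists U, Rs = T * U.
  by apply: dvdp_primitive_of_rat; rewrite // (eqp_dvdl _ T_SQ) (@Schain_dvdp _ _ _ 0).
have T_sres i : (1 <= i <= j)%N -> exists V, sres f f^`() i = T * V.
  by move=> i_range; apply: dvdp_primitive_of_rat; rewrite // (eqp_dvdl _ T_SQ) Schain_dvdp_sr.
have TF_S : redx F T %| Schain (redx F Rs) (fun i => redx F (sres f f^`() i)) j.
  apply: dvdp_Schain => [|i /T_sres [V ->]]; last by rewrite /redx rmorphM dvdp_mulIl.
  by rewrite Rs_TU /redx rmorphM dvdp_mulIl.
have modp_bound := size_redx_factor_le Rs_TU RsF_neq0 TF_S (Schain_neq0 _ RsF_neq0 j).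
have C_bound : (size (redx algC Rs) <=
                 size (critical_sres_neq0 j) + size (map_poly ratr SQ : {poly algC}))%N.
  apply: size_separable_le; rewrite // ?map_poly_eq0 ?Schain_neq0 // => x Rs_x.
  rewrite mem_filter crit_complete ?andbT; last first.
    by apply: xcritical_of_root_resultant; rewrite -Rs_roots.
  case: hasP => [//|sres_x] /=; rewrite root_map_Schain map_ratr_ratp Rs_x /=.
  apply/allP => i i_range; rewrite map_ratr_ratp /root; apply/negPn/negP => sres_neq0.
  by apply: sres_x; exists i.
rewrite size_map_poly -(eqp_size T_SQ) -map_ratr_ratp size_map_poly in C_bound.
move: modp_bound C_bound; rewrite !size_rat_int_poly.
set sF := size (redx F Rs); set sS := size (Schain _ _ _).
by set sR := size Rs; set sT := size T; lia.
Qed.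

Lemma sum_has_sres_neq0_le a rs : root_list (evalx a f) rs ->
  (\sum_(1 <= j < (size f).-1) has (fun i => specx a (sres f f^`() i) != 0%R) (iota 1 j)
    <= size rs)%N.
Proof.
move=> a_rs; set n := (size f).-1.
apply: leq_trans (sum_indicator_le (g := n - size rs) _ _) _; last by lia.
move=> j /hasP [i]; rewrite mem_iota => /andP [_ lt_i].
case: (ltnP (i + size rs) n) => [lt_n | ?]; last by lia.
by rewrite (specx_sres_eq0 a_rs lt_n) eqxx.
Qed.

Lemma sum_size_critical_sres_neq0_le (nroots : algC -> seq algC) :
    (forall a, a \in crit -> root_list (evalx a f) (nroots a)) ->
  (\sum_(1 <= j < (size f).-1) size (critical_sres_neq0 j)
    <= \sum_(a <- crit) size (nroots a))%N.
Proof.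
move=> crit_roots.
under eq_bigr => j _ do rewrite size_filter -sum1_count big_mkcond /=.
rewrite exchange_big /= big_seq [leqRHS]big_seq; apply: leq_sum => a a_crit.
apply: leq_trans (sum_has_sres_neq0_le (crit_roots a a_crit)).
by apply: leq_sum => j _; case: has.
Qed.

End CriticalFibres.

Theorem lemma4 (f : {poly {poly int}}) (p : nat) (Rs : {poly int})
    (crit : seq algC) (nroots : algC -> seq algC) :
  (forall g h : {poly {poly int}}, f = (g * g * h)%R ->
     (size g <= 1)%N /\ (size (g`_0)%R <= 1)%N) ->
  (1 <= (size f).-1)%N ->
  (forall a : algC, (size (evalx a f)).-1 = (size f).-1) ->
  prime p ->
  redx 'F_p (lead_coef f) != 0 ->
  redx 'F_p (lead_coef f^`()) != 0 ->
  `|zcontents Rs| = 1 ->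
  separable_poly (redx algC Rs) ->
  (forall a : algC, root (redx algC Rs) a = root (redx algC (resultant f f^`())) a) ->
  uniq crit ->
  (forall a : algC, a \in crit <-> xcritical f a) ->
  (forall a : algC, a \in crit -> root_list (evalx a f) (nroots a)) ->
  (\sum_(1 <= i < (size f).-1) ((size f).-1 - i) * dmod p f Rs i
     <= \sum_(a <- crit) size (nroots a))%N.
Proof.
move=> _ deg_f deg_evalx p_prime lc_f lc_df Rs_prim Rs_sep Rs_roots _ crit_xcrit crit_roots.
have size_f : (2 <= size f)%N by lia.
have size_evalx a : size (evalx a f) = size f.
  by have := deg_evalx a; move: size_f; set s := size (evalx a f); lia.
have crit_complete a : xcritical f a -> a \in crit by move/crit_xcrit.
have RsF_neq0 := redx_Fp_neq0 p_prime Rs_prim.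
set S := Schain (redx 'F_p Rs) (fun i => redx 'F_p (sres f f^`() i)).
have dmodE i : (0 < i)%N -> dmod p f Rs i = (size (S i.-1) - size (S i))%N.
  move=> i_gt0; rewrite /dmod -(size_Rchain _ RsF_neq0 i_gt0).
  by rewrite (eq_Rchain _ (fun k => sres_redxy k lc_f lc_df)).
under eq_big_nat => i /andP [i_gt0 _] do rewrite dmodE //.
rewrite (@weighted_telescope_sumn (fun k => size (S k))); last exact: size_Schain_leS.
apply: leq_trans (sum_size_critical_sres_neq0_le size_f size_evalx crit_roots).
by apply: leq_sum => j _; apply: Schain_size_drop_le.
Qed.
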